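(* For a translation-invariant real function $f$ defined on finite simplicial complexes with vertices in $\mathbb{R}^d\times\mathbb{A}$, the following are equivalent: (i) $f$ is weakly stabilizing; (ii) for every increasing sequence of cubes $(W_n)_{n\in\mathbb{N}}$ with $W_n\to\mathbb{R}^d$, the sequence $\Lambda_{(\mathbf{0},V,1,U)}f(\Delta_{W_n})$ converges in probability as $n\to\infty$.
   Context: Model. Fix $d\in\mathbb{N}$, a Borel space $(\mathbb{A},\mathcal{T})$ with a probability measure $\Theta$, an intensity $\gamma>0$ and $\alpha\in\mathbb{N}$. For $j\in\{1,\dots,\alpha\}$ let $\varphi_j:(\mathbb{R}^d\times\mathbb{A})^{j+1}\to[0,1]$ be measurable, symmetric and translation-invariant, i.e. $\varphi_j((x_0+t,a_0),\dots,(x_j+t,a_j))=\varphi_j((x_0,a_0),\dots,(x_j,a_j))$. Let $\mathbb{M}=\prod_{j=1}^{\alpha}[0,1]^{\mathbb{N}^{2j}}$ with the product $\sigma$-field and $\mathbb{Q}$ the product of uniform distributions on $[0,1]$ over all coordinates. Let $\Psi$ be a Poisson process on $\mathbb{R}^d\times\mathbb{A}\times[0,1]\times\mathbb{M}$ with intensity measure $\gamma\lambda_d\otimes\Theta\otimes\mathcal{U}([0,1])\otimes\mathbb{Q}$. For a locally finite counting measure $\psi$ on this space (distinct third coordinates) the complex $T(\psi)$ is built as follows. Fix an enumeration $z_0=\mathbf{0},z_1,\dots$ of $\mathbb{Z}^d$, $Q_k=[0,1)^d+z_k$. A point $(x,a,s,u)$ of $\psi$ with $x\in Q_k$ gets coordinates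 $(k,i)$ if it is the $i$-th smallest point of $\psi$ in $Q_k\times\mathbb{A}\times[0,1]\times\mathbb{M}$ in the order of third coordinates. For points $(x_0,a_0,s_0,u^{(0)}),\dots,(x_j,a_j,s_j,u^{(j)})$ with $s_0<\dots<s_j$, $1\le j\le\alpha$, and $\sigma=\{(x_0,a_0),\dots,(x_j,a_j)\}$, put $u(\sigma):=u^{(j)}_{m_0,l_0,\dots,m_{j-1},l_{j-1}}$ (coordinate in the factor $[0,1]^{\mathbb{N}^{2j}}$), $(m_k,l_k)$ the coordinates of the $k$-th point. Vertices of $T(\psi)$ are the points $(x,a)$ of $\psi$; a set $\sigma$ of $j+1$ vertices, $1\le j\le\alpha$, is a simplex iff $u(\rho)\le\varphi_{|\rho|-1}(\rho)$ for all $\rho\subseteq\sigma$ with $|\rho|\ge2$. Set $\Delta:=T(\Psi)$, $\Delta^{(x,a,t,u)}:=T(\Psi+\delta_{(x,a,t,u)})$. For a complex $K$ and $W\subseteq\mathbb{R}^d$, $K_W$ is the subcomplex of simplices all of whose vertices have first coordinate in $W$. For a real function $f$ on finite simplicial complexes, $\Lambda_{(x,a,t,u)}f(\Delta_W):=f(\Delta^{(x,a,t,u)}_W)-f(\Delta^{(x,a,t,u)}_{W\setminus\{x\}})$. Weak stabilization. Let $V\sim\Theta$ and $U\sim\mathbb{Q}$ be independent of each other and of $\Psi$. Cubes are half-open axis-parallel cubes $\prod_{i=1}^d[c_i,c_i+s)$; $W_n\to\mathbb{R}^d$ means every bounded set is contained in $W_n$ for all large $n$. $f$ is translation-invariant if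 $f(K)=f(K+t)$ for all $t\in\mathbb{R}^d$ and finite complexes $K$ ($K+t$ translates the $\mathbb{R}^d$-components of all vertices). $f$ is weakly stabilizing if it is translation-invariant and there is a real random variable $Z$ with $\Lambda_{(\mathbf{0},V,1,U)}f(\Delta_{W_n})\to Z$ in probability for every sequence of cubes $W_n\to\mathbb{R}^d$. *)

From HB Require Import structures.
From mathcomp Require Import all_boot all_order all_algebra perm.
From mathcomp Require Import all_classical all_reals all_analysis.
Set Implicit Arguments.
Unset Strict Implicit.
Unset Printing Implicit Defensive.
Import Order.TTheory GRing.Theory Num.Theory.
Local Open Scope classical_set_scope.
Local Open Scope ring_scope.
Local Open Scope card_scope.

Section Model.
Context (R : realType) (d : nat) (A : Type).

(* marks in M = prod_{j=1}^alpha [0,1]^(N^(2j)) : u j [:: m0; l0; ...; m_(j-1); l_(j-1)] *)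
Definition mark := nat -> seq nat -> R.

Record mpoint := Pt { px : 'rV[R]_d; pa : A; ps : R; pu : mark }.

Definition vertex := ('rV[R]_d * A)%type.
Definition vert (p : mpoint) : vertex := (px p, pa p).

Definition enumeration (z : nat -> 'rV[int]_d) := bijective z /\ z 0%N = 0.

Definition cell (z : nat -> 'rV[int]_d) (x : 'rV[R]_d) (k : nat) :=
  forall i : 'I_d, ((z k 0 i)%:~R <= x 0 i) /\ (x 0 i < (z k 0 i)%:~R + 1).

(* a configuration psi (a simple counting measure, as a set of points) *)
Definition bounded_set (B : set 'rV[R]_d) :=
  exists r : R, forall x, B x -> forall i : 'I_d, `|x 0 i| <= r.

Definition good_config (psi : set mpoint) :=
  (forall B, bounded_set B -> finite_set [set p | psi p /\ B (px p)]) /\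
  (forall p q, psi p -> psi q -> ps p = ps q -> p = q) /\
  (forall p, psi p -> 0 <= ps p < 1).

Definition coord (z : nat -> 'rV[int]_d) (psi : set mpoint) (p : mpoint)
    (k i : nat) :=
  psi p /\ cell z (px p) k /\ (1 <= i)%N /\
  [set q | psi q /\ cell z (px q) k /\ ps q < ps p] #= `I_(i.-1).

Definition ordered_enum (rho : set mpoint) (n : nat) (e : 'I_n.+1 -> mpoint) :=
  range e = rho /\ (forall i j : 'I_n.+1, (i < j)%N -> ps (e i) < ps (e j)).

(* u(rho) <= phi_{|rho|-1}(rho), where u(rho) = u^{(n)}_{m0,l0,...} of the
   last mpoint of rho *)
Definition u_le_phi (z : nat -> 'rV[int]_d)
    (phi : forall j : nat, ('I_j.+1 -> vertex) -> R) (psi : set mpoint)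
    (rho : set mpoint) :=
  forall (n : nat) (e : 'I_n.+1 -> mpoint) (c : 'I_n.+1 -> nat * nat),
    ordered_enum rho e ->
    (forall i, coord z psi (e i) (c i).1 (c i).2) ->
    pu (e ord_max) n
       (flatten [seq [:: (c (widen_ord (leqnSn n) i)).1;
                         (c (widen_ord (leqnSn n) i)).2] | i <- enum 'I_n])
    <= phi n (fun i => vert (e i)).

Definition psimplex (alpha : nat) z phi (psi : set mpoint) (S : set mpoint) :=
  S `<=` psi /\
  (exists j, (1 <= j <= alpha)%N /\ S #= `I_(j.+1)) /\
  (forall rho, rho `<=` S -> (exists m, (2 <= m)%N /\ rho #= `I_m) ->
     u_le_phi z phi psi rho).

Definition complex := set (set vertex).

Definition T alpha z phi (psi : set mpoint) : complex :=
  [set tau | (exists p, psi p /\ tau = [set vert p]) \/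
             (exists S, psimplex alpha z phi psi S /\ tau = vert @` S)].

Definition restr (K : complex) (W : set 'rV[R]_d) : complex :=
  [set sigma | K sigma /\ forall v, sigma v -> W v.1].

Definition is_fcomplex (K : complex) :=
  finite_set K /\
  (forall sigma, K sigma -> finite_set sigma /\ sigma !=set0) /\
  (forall sigma tau, K sigma -> tau `<=` sigma -> tau !=set0 -> K tau).

Definition ctrans (K : complex) (t : 'rV[R]_d) : complex :=
  [set (fun v : vertex => (v.1 + t, v.2)) @` sigma | sigma in K].

Definition translation_invariant (f : complex -> R) :=
  forall K t, is_fcomplex K -> f (ctrans K t) = f K.

Definition phi_ok (alpha : nat) (phi : forall j : nat, ('I_j.+1 -> vertex) -> R) :=
  forall j, (1 <= j <= alpha)%N ->
    (forall v, 0 <= phi j v <= 1) /\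
    (forall (s : {perm 'I_j.+1}) v, phi j (fun i => v (s i)) = phi j v) /\
    (forall v t, phi j (fun i => ((v i).1 + t, (v i).2)) = phi j v).

Definition is_cube (W : set 'rV[R]_d) :=
  exists (c : 'rV[R]_d) (s : R), 0 < s /\
    W = [set x | forall i : 'I_d, c 0 i <= x 0 i < c 0 i + s].

Definition tends_to_Rd (W : nat -> set 'rV[R]_d) :=
  forall B, bounded_set B -> exists N, forall n, (N <= n)%N -> B `<=` W n.

Definition increasing_sets (W : nat -> set 'rV[R]_d) :=
  forall n, W n `<=` W n.+1.

End Model.

Section Prob.
Context (R : realType) (dO : measure_display) (O : measurableType dO)
  (P : probability O R).

Definition cvg_in_prob (X : nat -> O -> R) (Z : O -> R) :=
  forall eps : R, 0 < eps ->
    (fun n => P [set w | eps < `|X n w - Z w| ]) @ \oo --> 0%E.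

End Prob.

Section Stab.
Context (R : realType) (d : nat) (A : Type) (alpha : nat)
  (z : nat -> 'rV[int]_d) (phi : forall j : nat, ('I_j.+1 -> vertex R d A) -> R)
  (O : Type) (Psi : O -> set (mpoint R d A)) (V : O -> A) (U : O -> mark R)
  (f : complex R d A -> R).

Definition Delta_add (w : O) : complex R d A :=
  T alpha z phi (Psi w `|` [set Pt 0 (V w) 1 (U w)]).

Definition LambdaX (W : set 'rV[R]_d) (w : O) : R :=
  f (restr (Delta_add w) W) - f (restr (Delta_add w) (W `\ 0)).

End Stab.

Definition weakly_stabilizing (R : realType) (d : nat) (A : Type) alpha z phi
  (dO : measure_display) (O : measurableType dO) (P : probability O R)
  (Psi : O -> set (mpoint R d A)) V U (f : complex R d A -> R) :=
  translation_invariant f /\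
  exists Z : O -> R, measurable_fun [set: O] Z /\
    forall W : nat -> set 'rV[R]_d, (forall n, is_cube (W n)) -> tends_to_Rd W ->
      cvg_in_prob P (fun n => LambdaX alpha z phi Psi V U f (W n)) Z.

From Pilot Require Import Defs.
From HB Require Import structures.
From mathcomp Require Import all_boot all_order all_algebra perm.
From mathcomp Require Import all_classical all_reals all_analysis.
Import Order.TTheory GRing.Theory Num.Theory.
Local Open Scope classical_set_scope.
Local Open Scope ring_scope.

(* Let Z be the limit in probability of Lambda f along the centred cubes
   Q_m = [-m-1, m+1)^d.  Given cubes W_n -> R^d, every subsequence has a further
   subsequence (W_(n_k)) that interleaves with a subsequence of (Q_m) into an
   increasing sequence W_(n_0) ⊆ Q_(m_0) ⊆ W_(n_1) ⊆ Q_(m_1) ⊆ ... exhausting R^d.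
   Along it Lambda f converges to some Z'; the odd terms form a subsequence of
   the Q-sequence, so Z' = Z almost surely, hence the even terms converge to Z.
   Since every subsequence has a sub-subsequence converging to Z, so does the
   whole sequence. *)

Lemma homo_ltn_ge_id {h : nat -> nat} :
  {homo h : m n / (m < n)%N} -> forall n, (n <= h n)%N.
Proof. by move=> h_incr; elim=> // n IHn; exact: leq_ltn_trans IHn (h_incr _ _ _). Qed.

Section Subsequences.
Context {T : topologicalType}.

Lemma cvgn_subseq (u : T ^nat) (h : nat -> nat) (l : T) :
  (forall n, (n <= h n)%N) -> u @ \oo --> l -> u \o h @ \oo --> l.
Proof.
move=> h_ge ul; apply: cvg_comp ul => P [N _ NP].
by exists N => // n /= Nn; apply: NP; exact: leq_trans Nn (h_ge n).
Qed.

Lemma cvgn_from_subsubseq (u : T ^nat) (l : T) :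
  (forall h, {homo h : m n / (m < n)%N} ->
     exists2 h', {homo h' : m n / (m < n)%N} & u \o h \o h' @ \oo --> l) ->
  u @ \oo --> l.
Proof.
move=> subsub Q lQ; apply: contrapT => Qnear.
have far M : exists n, (M <= n)%N /\ ~ Q (u n).
  apply: contrapT => nfar; apply: Qnear; exists M => // n /= Mn.
  by apply: contrapT => nQ; apply: nfar; exists n.
have [g g_far] := choice far.
pose h k := iter k (fun n => g n.+1) (g 0).
have hS k : h k.+1 = g (h k).+1 by rewrite /h iterS.
have h_incr : {homo h : m n / (m < n)%N}.
  by apply: homo_ltn => [y x t|k]; [exact: ltn_trans | rewrite hS; case: (g_far (h k).+1)].
have hQ n : ~ Q (u (h n)) by case: n => [|n]; rewrite ?hS; exact: (g_far _).2.
have [h' _ /(_ Q lQ) [K _ QK]] := subsub h h_incr.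
exact: hQ _ (QK K (leqnn K)).
Qed.

End Subsequences.

Section ConvergenceInProbability.
Context {R : realType} {dO : measure_display} {O : measurableType dO}
  (P : probability O R).

Lemma measurable_dist_gt (e : R) {Y Z : O -> R} :
  measurable_fun setT Y -> measurable_fun setT Z ->
  measurable [set w | e < `|Y w - Z w|].
Proof.
move=> mY mZ; have mYZ : measurable_fun setT (Num.Def.normr \o (Y \- Z)).
  exact: measurableT_comp (measurable_realfun.measurable_funB mY mZ).
have := mYZ measurableT _ (measurable_itv `]e, +oo[); rewrite setTI.
congr measurable; apply/seteqP; split => w /=; by rewrite in_itv /= andbT.
Qed.

Lemma prob_dist_gt_split (Y1 Y2 Y3 : O -> R) (e : R) :
  measurable_fun setT Y1 -> measurable_fun setT Y2 -> measurable_fun setT Y3 ->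
  (P [set w | (e < `|Y1 w - Y3 w|)%R] <=
   P [set w | (e / 2 < `|Y1 w - Y2 w|)%R] + P [set w | (e / 2 < `|Y2 w - Y3 w|)%R])%E.
Proof.
move=> m1 m2 m3.
have m12 := measurable_dist_gt (e / 2) m1 m2.
have m23 := measurable_dist_gt (e / 2) m2 m3.
apply: le_trans (measureU2 _ m12 m23); apply: le_measure.
- by rewrite inE; exact: measurable_dist_gt.
- by rewrite inE; exact: measurableU.
move=> w /=; apply: contraPP => /not_orP[/negP + /negP]; rewrite -!leNgt => h12 h23.
apply/negP; rewrite -leNgt -[Y1 w](subrK (Y2 w)) -addrA [e]splitr.
exact: le_trans (ler_normD _ _) (lerD h12 h23).
Qed.

Lemma cvg_in_prob_subseq {X : nat -> O -> R} {Z : O -> R} {h : nat -> nat} :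
  (forall n, (n <= h n)%N) -> cvg_in_prob P X Z -> cvg_in_prob P (X \o h) Z.
Proof. by move=> h_ge XZ e e0; exact: cvgn_subseq h_ge (XZ e e0). Qed.

Lemma cvg_in_prob_from_subsubseq (X : nat -> O -> R) (Z : O -> R) :
  (forall h, {homo h : m n / (m < n)%N} ->
     exists2 h', {homo h' : m n / (m < n)%N} & cvg_in_prob P (X \o h \o h') Z) ->
  cvg_in_prob P X Z.
Proof.
move=> subsub e e0; apply: cvgn_from_subsubseq => h h_incr.
by have [h' h'_incr XZ] := subsub h h_incr; exists h' => //; exact: XZ.
Qed.

Lemma cvg_in_prob_ae_unique {X : nat -> O -> R} {Z Z' : O -> R} :
  (forall n, measurable_fun setT (X n)) -> measurable_fun setT Z ->
  measurable_fun setT Z' -> cvg_in_prob P X Z -> cvg_in_prob P X Z' ->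
  forall e, 0 < e -> P [set w | e < `|Z w - Z' w|] = 0%E.
Proof.
move=> mX mZ mZ' XZ XZ' e e0.
have e20 : 0 < e / 2 by rewrite divr_gt0.
have sym n : P [set w | e / 2 < `|Z w - X n w|] = P [set w | e / 2 < `|X n w - Z w|].
  by congr (P _); apply/seteqP; split => w /=; rewrite distrC.
have bound0 : (fun n => P [set w | (e / 2 < `|X n w - Z w|)%R] +
                        P [set w | (e / 2 < `|X n w - Z' w|)%R])%E @ \oo --> 0%E.
  by rewrite -[0%E]adde0; apply: cvgeD => //; [exact: XZ | exact: XZ'].
have : (fun=> P [set w | e < `|Z w - Z' w|]) @ \oo --> 0%E.
  apply: (@squeeze_cvge _ _ _ _ (cst 0%E) _ _ _ _ (cvg_cst _) bound0).
  by near=> n; rewrite measure_ge0 /= -sym; exact: prob_dist_gt_split.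
by move/(cvg_lim (@ereal_hausdorff R)); rewrite lim_cst.
Unshelve. all: by end_near.
Qed.

Lemma cvg_in_prob_ae_eq {X : nat -> O -> R} {Z Z' : O -> R} :
  (forall n, measurable_fun setT (X n)) -> measurable_fun setT Z ->
  measurable_fun setT Z' -> cvg_in_prob P X Z ->
  (forall e, 0 < e -> P [set w | e < `|Z w - Z' w|] = 0%E) ->
  cvg_in_prob P X Z'.
Proof.
move=> mX mZ mZ' XZ ZZ' e e0.
have e20 : 0 < e / 2 by rewrite divr_gt0.
apply: (@squeeze_cvge _ _ _ _ (cst 0%E) _ _ _ _ (cvg_cst _) (XZ _ e20)).
near=> n; rewrite measure_ge0 /=.
by rewrite -[X in (_ <= X)%E]adde0 -(ZZ' _ e20); exact: prob_dist_gt_split.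
Unshelve. all: by end_near.
Qed.

End ConvergenceInProbability.

Definition interleave {T : Type} (a b : nat -> T) (j : nat) : T :=
  if odd j then b j./2 else a j./2.

Lemma interleave_double {T : Type} (a b : nat -> T) k : interleave a b k.*2 = a k.
Proof. by rewrite /interleave odd_double doubleK. Qed.

Lemma interleave_doubleS {T : Type} (a b : nat -> T) k :
  interleave a b k.*2.+1 = b k.
Proof. by rewrite /interleave /= odd_double uphalf_double. Qed.

Lemma cvg_in_prob_interleave {R : realType} {dO : measure_display}
    {O : measurableType dO} (P : probability O R) {I : Type} (X : I -> O -> R)
    (a b : nat -> I) {Z Z' : O -> R} :
  (forall n, measurable_fun setT (X (a n))) ->
  (forall n, measurable_fun setT (X (b n))) ->
  measurable_fun setT Z -> measurable_fun setT Z' ->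
  cvg_in_prob P (X \o interleave a b) Z -> cvg_in_prob P (X \o b) Z' ->
  cvg_in_prob P (X \o a) Z'.
Proof.
move=> mXa mXb mZ mZ' XZ XbZ'.
have double_ge k : (k <= k.*2)%N by rewrite -addnn leq_addr.
have XaZ : cvg_in_prob P (X \o a) Z.
  have := cvg_in_prob_subseq P double_ge XZ.
  by congr cvg_in_prob; apply/funext => k; rewrite /= interleave_double.
have XbZ : cvg_in_prob P (X \o b) Z.
  have := cvg_in_prob_subseq P (fun k => leqW (double_ge k)) XZ.
  by congr cvg_in_prob; apply/funext => k; rewrite /= interleave_doubleS.
have Z_ae_Z' := cvg_in_prob_ae_unique P mXb mZ mZ' XbZ XbZ'.
exact: (cvg_in_prob_ae_eq P mXa mZ mZ' XaZ Z_ae_Z').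
Qed.

Section NestedInterleaving.
Context {T : Type} (W Q : nat -> set T) (M N : nat -> nat).
Hypothesis Q_mono : {homo Q : m m' / (m <= m')%N >-> m `<=` m'}.
Hypothesis W_sub_Q : forall n, W n `<=` Q (M n).
Hypothesis Q_sub_W : forall m n, (N m <= n)%N -> Q m `<=` W n.

(* [w_idx k.+1] is taken beyond [N (q_idx k)], with [q_idx k] unfolded. *)
Fixpoint w_idx (k : nat) : nat :=
  if k is k'.+1 then maxn (w_idx k').+1 (N (maxn (M (w_idx k')) k')) else 0.

Definition q_idx (k : nat) : nat := maxn (M (w_idx k)) k.

Lemma w_idx_incr : {homo w_idx : m n / (m < n)%N}.
Proof. by apply: homo_ltn => [y x t|k]; [exact: ltn_trans | exact: leq_maxl]. Qed.

Lemma q_idx_ge k : (k <= q_idx k)%N.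
Proof. exact: leq_maxr. Qed.

Lemma interleave_nested j :
  interleave (W \o w_idx) (Q \o q_idx) j `<=` interleave (W \o w_idx) (Q \o q_idx) j.+1.
Proof.
rewrite -[j]odd_double_half; case: (odd j) => /=; rewrite ?add1n ?add0n.
  by rewrite -doubleS interleave_double interleave_doubleS; apply: Q_sub_W; exact: leq_maxr.
rewrite interleave_double interleave_doubleS /=.
exact: subset_trans (W_sub_Q _) (Q_mono _ _ (leq_maxl _ _)).
Qed.

End NestedInterleaving.

Section CenteredCubes.
Context {R : realType} {d : nat}.

Definition centered_cube (m : nat) : set 'rV[R]_d :=
  [set x | forall i, - (m.+1)%:R <= x 0 i < (m.+1)%:R].

Lemma centered_cube_is_cube m : is_cube (centered_cube m).
Proof.
exists (const_mx (- (m.+1)%:R)), ((m.+1)%:R *+ 2); split.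
  by rewrite pmulrn_lgt0 // ltr0Sn.
by apply/seteqP; split=> x /= x_in i; move: (x_in i); rewrite mxE mulr2n addrA addNr add0r.
Qed.

Lemma centered_cube_mono :
  {homo centered_cube : m m' / (m <= m')%N >-> m `<=` m'}.
Proof.
move=> m m' mm' x x_in i; have /andP[lo hi] := x_in i.
have le_mm' : (m.+1)%:R <= (m'.+1)%:R :> R by rewrite ler_nat.
by rewrite (le_trans _ lo) ?lerN2 // (lt_le_trans hi le_mm').
Qed.

Lemma centered_cube_bounded m : Defs.bounded_set (centered_cube m).
Proof. by exists (m.+1)%:R => x x_in i; have /andP[lo hi] := x_in i; rewrite ler_norml lo ltW. Qed.

Lemma bounded_sub_centered_cube {B : set 'rV[R]_d} :
  Defs.bounded_set B -> exists m, B `<=` centered_cube m.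
Proof.
move=> [r Br]; exists (Num.truncn r) => x Bx i.
have : `|x 0 i| < (Num.truncn r).+1%:R by exact: le_lt_trans (Br x Bx i) (truncnS_gt r).
by rewrite ltr_norml => /andP[lo hi]; rewrite hi ltW.
Qed.

Lemma cube_bounded {W : set 'rV[R]_d} : is_cube W -> Defs.bounded_set W.
Proof.
move=> [c [s [s0 ->]]]; exists (\sum_i `|c 0 i| + s) => x /= x_in i.
have /andP[lo hi] := x_in i.
have ci : `|c 0 i| <= \sum_j `|c 0 j| by rewrite (bigD1 i) //= lerDl sumr_ge0.
rewrite ler_norml; apply/andP; split.
  rewrite (le_trans _ lo) // lerNl (le_trans (ler_norm _)) // normrN.
  by rewrite (le_trans ci) // lerDl ltW.
by rewrite (le_trans (ltW hi)) // lerD2r (le_trans (ler_norm _)).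
Qed.

Lemma tends_to_Rd_increasing {C : nat -> set 'rV[R]_d} :
  increasing_sets C -> (forall m, exists n, centered_cube m `<=` C n) ->
  tends_to_Rd C.
Proof.
move=> C_incr cover B /bounded_sub_centered_cube[m Bm].
have [n mn] := cover m; exists n => k nk.
have C_mono := homo_leq (@subset_refl _) (@subset_trans _) C_incr.
exact: subset_trans Bm (subset_trans mn (C_mono _ _ nk)).
Qed.

Lemma tends_to_Rd_centered : tends_to_Rd centered_cube.
Proof.
apply: tends_to_Rd_increasing => [m|m]; last by exists m.
exact: centered_cube_mono.
Qed.

Lemma tends_to_Rd_subseq {W : nat -> set 'rV[R]_d} {h : nat -> nat} :
  (forall n, (n <= h n)%N) -> tends_to_Rd W -> tends_to_Rd (W \o h).
Proof.
move=> h_ge Wt B /Wt[N BW]; exists N => n Nn.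
by apply: BW; exact: leq_trans Nn (h_ge n).
Qed.

Lemma interleave_centered_cubes (W : nat -> set 'rV[R]_d) :
  (forall n, is_cube (W n)) -> tends_to_Rd W ->
  exists h m, [/\ {homo h : i j / (i < j)%N}, forall k, (k <= m k)%N,
    forall j, is_cube (interleave (W \o h) (centered_cube \o m) j),
    increasing_sets (interleave (W \o h) (centered_cube \o m)) &
    tends_to_Rd (interleave (W \o h) (centered_cube \o m))].
Proof.
move=> W_cube Wt.
have [M WM] := choice (fun n => bounded_sub_centered_cube (cube_bounded (W_cube n))).
have [N NW] := choice (fun m => Wt _ (centered_cube_bounded m)).
have C_incr := interleave_nested _ _ _ _ centered_cube_mono WM NW.
exists (w_idx M N), (q_idx M N); split=> //; [exact: w_idx_incr | exact: q_idx_ge | |].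
  by move=> j; rewrite /interleave; case: odd; [exact: centered_cube_is_cube | exact: W_cube].
apply: tends_to_Rd_increasing => // m; exists m.*2.+1.
by rewrite interleave_doubleS; exact: centered_cube_mono _ _ (q_idx_ge M N m).
Qed.

End CenteredCubes.

Theorem proposition5p1 (R : realType) (d : nat)
  (dA : measure_display) (A : measurableType dA) (alpha : nat)
  (phi : forall j : nat, ('I_j.+1 -> vertex R d A) -> R)
  (Hphi : phi_ok alpha phi)
  (z : nat -> 'rV[int]_d) (Hz : enumeration z)
  (dO : measure_display) (O : measurableType dO) (P : probability O R)
  (Psi : O -> set (mpoint R d A)) (V : O -> A) (U : O -> mark R)
  (HPsi : forall w, good_config (Psi w))
  (f : complex R d A -> R) (Hf : translation_invariant f)
  (Hmeas : forall W : set 'rV[R]_d, is_cube W ->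
     measurable_fun [set: O] (LambdaX alpha z phi Psi V U f W)) :
  weakly_stabilizing alpha z phi P Psi V U f <->
  (forall W : nat -> set 'rV[R]_d, (forall n, is_cube (W n)) ->
     increasing_sets W -> tends_to_Rd W ->
     exists Z : O -> R, measurable_fun [set: O] Z /\
       cvg_in_prob P (fun n => LambdaX alpha z phi Psi V U f (W n)) Z).
Proof.
set X := LambdaX alpha z phi Psi V U f.
split=> [[_ [Z [mZ XZ]]] W W_cube _ Wt|stab]; first by exists Z; split=> //; exact: XZ.
have [Z [mZ XZ]] := stab _ centered_cube_is_cube
  (fun m => centered_cube_mono _ _ (leqnSn m)) tends_to_Rd_centered.
split=> //; exists Z; split=> // W W_cube Wt.
apply: cvg_in_prob_from_subsubseq => h h_incr.
have [h' [m [h'_incr m_ge C_cube C_incr Ct]]] := interleave_centered_cubes (W \o h)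
  (fun n => W_cube (h n)) (tends_to_Rd_subseq (homo_ltn_ge_id h_incr) Wt).
have [ZC [mZC XCZ]] := stab _ C_cube C_incr Ct.
exists h' => //.
have XmZ := cvg_in_prob_subseq P m_ge XZ.
apply: (cvg_in_prob_interleave P X _ _ _ _ mZC mZ XCZ XmZ) => n /=.
- exact/Hmeas/W_cube.
- exact/Hmeas/centered_cube_is_cube.
Qed.
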